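(* Let $N=\{1,\ldots,n\}$ and $\mathcal{X}=\{-1,1\}^n$. If $n$ is odd, a deterministic voting rule $\phi:\mathcal{X}\to\{-1,1\}$ is robust and anonymous if and only if it is a simple majority rule. If $n$ is even, no deterministic voting rule is both robust and anonymous.
   Context: A deterministic voting rule $\phi$ is anonymous if $\phi(x)=\phi((x_{\pi(i)})_{i\in N})$ for all $x$ and all permutations $\pi$ of $N$. Responsiveness: $r_i(\phi,p)=p(\{x:\phi(x)=x_i\})$ for $p\in\Delta(\mathcal{X})$ (probability distributions on $\mathcal{X}$). $\phi$ is robust if for every $p\in\Delta(\mathcal{X})$ there is some $i\in N$ with $r_i(\phi,p)>1/2$. A simple majority rule is a rule with $\phi(x)=1$ whenever $\sum_i x_i>0$ and $\phi(x)=-1$ whenever $\sum_ix_i<0$ (for odd $n$ this determines $\phi$ uniquely). *)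

From mathcomp Require Import all_boot all_order all_algebra all_fingroup.
From mathcomp Require Import reals.
Set Implicit Arguments. Unset Strict Implicit. Unset Printing Implicit Defensive.
Import Order.TTheory GRing.Theory Num.Theory.
Local Open Scope ring_scope.

(* Voters N = 'I_n (i.e. {0,..,n-1}, in bijection with {1,..,n}).
   A vote in {-1,1} is encoded as a bool: true = 1, false = -1. *)
Definition vote_val (b : bool) : int := if b then 1 else -1.

Definition profile (n : nat) := {ffun 'I_n -> bool}.

Definition rule (n : nat) := profile n -> bool.

Definition anonymous (n : nat) (phi : rule n) : Prop :=
  forall (x : profile n) (pi : 'S_n), phi x = phi [ffun i => x (pi i)].

Definition distribution (R : realType) (n : nat) (p : profile n -> R) : Prop :=
  (forall x, 0 <= p x) /\ \sum_(x : profile n) p x = 1.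

Definition responsiveness (R : realType) (n : nat) (phi : rule n)
  (p : profile n -> R) (i : 'I_n) : R :=
  \sum_(x : profile n | phi x == x i) p x.

Definition robust (R : realType) (n : nat) (phi : rule n) : Prop :=
  forall p : profile n -> R, distribution p ->
    exists i : 'I_n, responsiveness phi p i > 2^-1.

Definition simple_majority (n : nat) (phi : rule n) : Prop :=
  forall x : profile n,
    ((0 < \sum_(i < n) vote_val (x i))%R -> phi x = true) /\
    ((\sum_(i < n) vote_val (x i) < 0)%R -> phi x = false).

(* The responsivenesses of phi sum to the expected number of voters who agree
   with the outcome.  Under simple majority (n odd) every profile has more than
   n/2 such voters, so some voter has responsiveness above 1/2.  Conversely, if
   an anonymous rule leaves at most n/2 voters agreeing at some profile x, take
   the uniform distribution on the orbit of x under relabelling the voters: it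
   makes all responsivenesses equal, and as their sum is at most n/2 none
   exceeds 1/2.  For odd n this forces simple majority; for even n the profile
   with n/2 votes each way is always such an x. *)
From mathcomp Require Import all_boot all_order all_algebra all_fingroup.
From mathcomp Require Import reals zify lra.
Set Implicit Arguments. Unset Strict Implicit. Unset Printing Implicit Defensive.
Import Order.TTheory GRing.Theory Num.Theory.
Local Open Scope ring_scope.

Definition agreement n (x : profile n) (b : bool) : nat := #|[pred i | x i == b]|.

Definition permute n (x : profile n) (s : 'S_n) : profile n := [ffun i => x (s i)].

Section Profiles.

Variable n : nat.
Implicit Types (x : profile n) (s t : 'S_n) (b : bool).

Lemma permute1 x : permute x 1 = x.
Proof. by apply/ffunP => i; rewrite ffunE perm1. Qed.

Lemma permuteM x s t : permute (permute x s) t = permute x (t * s).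
Proof. by apply/ffunP => i; rewrite !ffunE permM. Qed.

Lemma permuteK s : cancel (@permute n^~ s) (@permute n^~ s^-1%g).
Proof. by move=> x; rewrite permuteM mulVg permute1. Qed.

Lemma agreement_permute x s b : agreement (permute x s) b = agreement x b.
Proof.
rewrite /agreement -!sum1_card [RHS](reindex_inj (@perm_inj _ s)).
by apply: eq_bigl => i; rewrite !inE ffunE.
Qed.

Lemma agreementN x b : (agreement x b + agreement x (~~ b))%N = n.
Proof.
rewrite -[RHS]card_ord -(cardC [pred i | x i == b]) /agreement.
by congr addn; apply: eq_card => i; rewrite !inE; case: b; case: (x i).
Qed.

Lemma sum_vote_val x :
  \sum_(i < n) vote_val (x i) = (agreement x true)%:Z - (agreement x false)%:Z.
Proof.
rewrite (bigID (fun i => x i)) /= (eq_bigr (fun _ => 1)); last by move=> i ->.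
rewrite [X in _ + X](eq_bigr (fun _ => -1)); last by move=> i /negbTE ->.
rewrite !sumr_const mulNrn !natz /agreement.
by congr (Posz _ - Posz _); apply: eq_card => i; rewrite -!topredE /=; case: (x i).
Qed.

Lemma strict_majority_unique x b c :
  (n < 2 * agreement x b)%N -> (n < 2 * agreement x c)%N -> b = c.
Proof.
have := agreementN x b; case: b c => [] [] //= *; exfalso; lia.
Qed.

Lemma tied_profile_exists : ~~ odd n ->
  exists x : profile n, forall b, (2 * agreement x b)%N = n.
Proof.
move=> even_n; have n_eq : n = (n./2 + n./2)%N.
  by rewrite addnn -[LHS]odd_double_half (negbTE even_n).
pose x : profile n := [ffun i : 'I_n => (i < n./2)%N].
have half_le : (n./2 <= n)%N by rewrite [X in (_ <= X)%N]n_eq leq_addr.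
have agree_true : agreement x true = n./2.
  rewrite /agreement -sum1_card (eq_bigl (fun i : 'I_n => (i < n./2)%N)).
    by rewrite (big_ord_narrow half_le) sum1_card card_ord.
  by move=> i; rewrite !inE ffunE; case: (_ < _)%N.
exists x => b; have := agreementN x true; rewrite agree_true.
by clearbody x; case: b => /=; lia.
Qed.

Definition permute_orbit x : {set profile n} := [set permute x s | s : 'S_n].

Lemma permute_orbit_id x : x \in permute_orbit x.
Proof. by rewrite -[x in x \in _]permute1 imset_f. Qed.

Lemma mem_permute_orbit x y s :
  (permute y s \in permute_orbit x) = (y \in permute_orbit x).
Proof.
suff orbitP z t : z \in permute_orbit x -> permute z t \in permute_orbit x.
  by apply/idP/idP => [/(orbitP _ s^-1%g)|/orbitP //]; rewrite permuteK.
by case/imsetP => u _ ->; rewrite permuteM imset_f.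
Qed.

End Profiles.

Lemma simple_majorityP n (phi : rule n) : odd n ->
  simple_majority phi <-> forall x, (n < 2 * agreement x (phi x))%N.
Proof.
move=> odd_n; split=> maj x; have := agreementN x true; rewrite /= => sum_n.
- have [pos neg] := maj x; rewrite sum_vote_val in pos neg.
  case: (ltngtP (agreement x false) (agreement x true)) => [lt|gt|eq].
  + by rewrite pos; lia.
  + by rewrite neg; lia.
  + have : odd (agreement x true + agreement x false) by rewrite sum_n.
    by rewrite eq addnn odd_double.
- rewrite sum_vote_val; split=> sign; apply: strict_majority_unique (maj x) _; lia.
Qed.

Lemma anonymous_of_strict_majority n (phi : rule n) :
  (forall x, n < 2 * agreement x (phi x))%N -> anonymous phi.
Proof.
move=> maj x s; apply: strict_majority_unique (maj x) _.
by rewrite -(agreement_permute x s); apply: maj.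
Qed.

Section Responsiveness.

Variables (R : realType) (n : nat) (phi : rule n).
Implicit Types (p : profile n -> R) (x : profile n).

Lemma sum_responsiveness p :
  \sum_i responsiveness phi p i = \sum_x p x * (agreement x (phi x))%:R.
Proof.
rewrite /responsiveness; under eq_bigr do rewrite big_mkcond.
rewrite exchange_big; apply: eq_bigr => x _.
rewrite -big_mkcond sumr_const mulr_natr /agreement.
by congr (_ *+ _); apply: eq_card => i; rewrite !inE eq_sym.
Qed.

Lemma responsiveness_permute_invariant p i j :
  anonymous phi -> (forall x s, p (permute x s) = p x) ->
  responsiveness phi p j = responsiveness phi p i.
Proof.
move=> anon_phi p_inv; rewrite /responsiveness.
rewrite (reindex_inj (can_inj (permuteK (tperm i j)))) /=.
apply: eq_big => [x|x _]; last by rewrite p_inv.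
by rewrite -anon_phi ffunE tpermR.
Qed.

Lemma robust_of_strict_majority :
  (forall x, n < 2 * agreement x (phi x))%N -> robust R phi.
Proof.
move=> maj p [p_ge0 p_sum1].
have [i resp_gt | resp_le] := pickP (fun i => 2^-1 < responsiveness phi p i).
  by exists i.
exfalso.
have sum_le : \sum_i responsiveness phi p i <= n%:R / 2.
  have -> : n%:R / 2 = \sum_(i < n) (2^-1 : R) by rewrite sumr_const card_ord mulr_natl.
  by apply: ler_sum => i _; rewrite leNgt resp_le.
have sum_ge : n.+1%:R / 2 <= \sum_i responsiveness phi p i.
  have -> : n.+1%:R / 2 = \sum_x p x * (n.+1%:R / 2) by rewrite -mulr_suml p_sum1 mul1r.
  rewrite sum_responsiveness.
  apply: ler_sum => x _; rewrite ler_wpM2l // ler_pdivrMr // -natrM ler_nat.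
  by rewrite mulnC (maj x).
by move: sum_le sum_ge; rewrite -[n.+1%:R]natr1; lra.
Qed.

Definition orbit_uniform x (y : profile n) : R :=
  if y \in permute_orbit x then #|permute_orbit x|%:R^-1 else 0.

Lemma orbit_uniform_distribution x : distribution (orbit_uniform x).
Proof.
rewrite /orbit_uniform; set O := permute_orbit x.
have O_gt0 : (0 < #|O|)%N.
  by rewrite card_gt0; apply/set0Pn; exists x; apply: permute_orbit_id.
split=> [y|]; first by case: ifP => _; rewrite ?invr_ge0 ?ler0n.
by rewrite -big_mkcond sumr_const -[_^-1 *+ _]mulr_natr mulVf // pnatr_eq0 -lt0n.
Qed.

Lemma not_robust_of_weak_minority x :
  anonymous phi -> (2 * agreement x (phi x) <= n)%N -> ~ robust R phi.
Proof.
move=> anon_phi minority /(_ _ (orbit_uniform_distribution x)) [i resp_gt].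
set p := orbit_uniform x in resp_gt.
have resp_eq j : responsiveness phi p j = responsiveness phi p i.
  apply: responsiveness_permute_invariant => // y s.
  by rewrite /p /orbit_uniform mem_permute_orbit.
have sum_eq : \sum_j responsiveness phi p j = (agreement x (phi x))%:R.
  rewrite sum_responsiveness -[RHS]mul1r -(proj2 (orbit_uniform_distribution x)).
  rewrite mulr_suml; apply: eq_bigr => y _; rewrite /p /orbit_uniform.
  case: imsetP => [[s _ ->]|_]; last by rewrite !mul0r.
  by rewrite -anon_phi agreement_permute.
move: sum_eq; rewrite (eq_bigr _ (fun j _ => resp_eq j)) sumr_const card_ord.
have : (2 * agreement x (phi x))%:R <= n%:R :> R by rewrite ler_nat.
have : 0 < n%:R :> R by rewrite ltr0n (leq_ltn_trans _ (ltn_ord i)).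
by rewrite natrM -mulr_natr; nra.
Qed.

End Responsiveness.

Theorem corollary2 (R : realType) (n : nat) :
  (odd n -> forall phi : rule n,
      (@robust R n phi /\ anonymous phi) <-> simple_majority phi) /\
  (~~ odd n -> forall phi : rule n, ~ (@robust R n phi /\ anonymous phi)).
Proof.
split=> [odd_n phi | even_n phi [robust_phi anon_phi]].
  rewrite simple_majorityP //; split=> [[robust_phi anon_phi] x | maj].
    rewrite ltnNge; apply/negP => minority.
    exact: not_robust_of_weak_minority anon_phi minority robust_phi.
  split; [exact: robust_of_strict_majority | exact: anonymous_of_strict_majority].
have [x tied] := tied_profile_exists even_n.
exact: not_robust_of_weak_minority anon_phi (eq_leq (tied (phi x))) robust_phi.
Qed.
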